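(* For any strong algebra $\mathcal{A}=(A,\le,\otimes,e,\to_{\mathcal{A}})$ there exist a non-commutative spacetime $\mathcal{S}=(\mathscr{X},\nabla)$, a monotone map $F:\mathscr{X}\to\mathscr{X}$ and a strict monoidal order embedding $i:(A,\le,\otimes,e)\to\mathscr{X}$ such that $i(a\to_{\mathcal{A}}b)=F(i(a))\to_{\mathcal{S}}F(i(b))$ for all $a,b\in A$.
   Context: A monoidal poset $(A,\le,\otimes,e)$ is a poset with a monoid structure whose multiplication is monotone in each argument. An implication on it is a function $\to:A^{op}\times A\to A$ (antitone in the first, monotone in the second argument) with $e\le a\to a$ and $(a\to b)\otimes(b\to c)\le a\to c$ for all $a,b,c$; a strong algebra is a monoidal poset with an implication. A quantale is a monoidal poset with all joins whose multiplication distributes over arbitrary joins in each argument. A non-commutative spacetime is $(\mathscr{X},\nabla)$ with $\mathscr{X}$ a quantale and $\nabla$ join preserving and oplax monoidal ($\nabla e\le e$, $\nabla(a\otimes b)\le\nabla a\otimes\nabla b$). Its implication $\to_{\mathcal{S}}$ is $a\to_{\mathcal{S}}b=\Box(a\Rightarrow b)$, where $\Box$ is the right adjoint of $\nabla$ and $\Rightarrow$ the right adjoint of $a\otimes(-)$; equivalently $a\otimes\nabla b\le c$ iff $b\le a\to_{\mathcal{S}}c$. A strict monoidal order embedding is a map $i$ with $i(e)=e$, $i(a\otimes b)=i(a)\otimes i(b)$ and $a\le b\iff i(a)\le i(b)$. *)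

Set Implicit Arguments.
Unset Strict Implicit.

Record monoidal_poset (A : Type) (le : A -> A -> Prop) (mul : A -> A -> A) (e : A)
  : Prop := {
  mp_refl : forall a, le a a;
  mp_trans : forall a b c, le a b -> le b c -> le a c;
  mp_antisym : forall a b, le a b -> le b a -> a = b;
  mp_assoc : forall a b c, mul (mul a b) c = mul a (mul b c);
  mp_unit_l : forall a, mul e a = a;
  mp_unit_r : forall a, mul a e = a;
  mp_mono_l : forall a a' b, le a a' -> le (mul a b) (mul a' b);
  mp_mono_r : forall a b b', le b b' -> le (mul a b) (mul a b')
}.

Record is_implication (A : Type) (le : A -> A -> Prop) (mul : A -> A -> A) (e : A)
  (imp : A -> A -> A) : Prop := {
  imp_anti : forall a a' b, le a a' -> le (imp a' b) (imp a b);
  imp_mono : forall a b b', le b b' -> le (imp a b) (imp a b');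
  imp_refl : forall a, le e (imp a a);
  imp_comp : forall a b c, le (mul (imp a b) (imp b c)) (imp a c)
}.

Definition strong_algebra (A : Type) (le : A -> A -> Prop) (mul : A -> A -> A) (e : A)
  (imp : A -> A -> A) : Prop :=
  monoidal_poset le mul e /\ is_implication le mul e imp.

Record Quantale : Type := {
  qcar :> Type;
  qle : qcar -> qcar -> Prop;
  qmul : qcar -> qcar -> qcar;
  qe : qcar;
  qsup : (qcar -> Prop) -> qcar;
  q_mp : monoidal_poset qle qmul qe;
  q_sup_ub : forall (S : qcar -> Prop) x, S x -> qle x (@qsup S);
  q_sup_least : forall (S : qcar -> Prop) u, (forall x, S x -> qle x u) -> qle (@qsup S) u;
  q_distr_l : forall a (S : qcar -> Prop),
      qmul a (@qsup S) = qsup (fun y => exists x, S x /\ y = qmul a x);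
  q_distr_r : forall a (S : qcar -> Prop),
      qmul (@qsup S) a = qsup (fun y => exists x, S x /\ y = qmul x a)
}.

Record Spacetime : Type := {
  st_q :> Quantale;
  nabla : st_q -> st_q;
  nabla_join : forall (S : st_q -> Prop),
      nabla (@qsup st_q S) = @qsup st_q (fun y => exists x, S x /\ y = nabla x);
  nabla_unit : @qle st_q (nabla (@qe st_q)) (@qe st_q);
  nabla_mul : forall a b,
      @qle st_q (nabla (@qmul st_q a b)) (@qmul st_q (nabla a) (nabla b))
}.

(** Right adjoint of [a ⊗ (-)]:  a ⇒ b = ⋁ {x | a ⊗ x ≤ b}. *)
Definition rimp (S : Spacetime) (a b : S) : S :=
  @qsup S (fun x => @qle S (@qmul S a x) b).

(** Box = right adjoint of nabla:  Box a = ⋁ {x | nabla x ≤ a}. *)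
Definition box (S : Spacetime) (a : S) : S :=
  @qsup S (fun x => @qle S (@nabla S x) a).

Definition impS (S : Spacetime) (a b : S) : S := @box S (@rimp S a b).

Definition strict_monoidal_order_embedding (A : Type) (le : A -> A -> Prop)
  (mul : A -> A -> A) (e : A) (X : Quantale) (i : A -> X) : Prop :=
  i e = @qe X /\ (forall a b, i (mul a b) = @qmul X (i a) (i b)) /\
  (forall a b, le a b <-> @qle X (i a) (i b)).

(** The strong algebra A is embedded into the quantale of downsets of
    M = A × P(A), ordered componentwise and multiplied by (⊗, ∩), through
    i a = ↓(a, A); the modality ∇ forgets the second component, and F U is
    generated by the pairs (c → a, ↓c) with i a ≤ U.  The second component
    remembers the source c of an arrow, which ∇ x cannot alter, so
    F(i a) ⊗ ∇x ≤ F(i b) means that x post-composes arrows into a to arrows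
    into b: composition of implications shows that i(a → b) qualifies, and
    testing against (a → a, ↓a) shows that nothing larger does. *)

From Stdlib Require Import FunctionalExtensionality PropExtensionality ProofIrrelevance.

Set Implicit Arguments.
Unset Strict Implicit.

Section ProductMonoidalPoset.
Variables (A B : Type) (leA : A -> A -> Prop) (mulA : A -> A -> A) (eA : A)
  (leB : B -> B -> Prop) (mulB : B -> B -> B) (eB : B).

Definition prod_le (p q : A * B) : Prop := leA (fst p) (fst q) /\ leB (snd p) (snd q).
Definition prod_mul (p q : A * B) : A * B := (mulA (fst p) (fst q), mulB (snd p) (snd q)).

Lemma prod_monoidal_poset :
  monoidal_poset leA mulA eA -> monoidal_poset leB mulB eB ->
  monoidal_poset prod_le prod_mul (eA, eB).
Proof.
  intros HA HB; unfold prod_le, prod_mul; split; simpl.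
  - intros [a b]; split; [apply (mp_refl HA) | apply (mp_refl HB)].
  - intros [a b] [a' b'] [a'' b''] [Ha Hb] [Ha' Hb'];
      split; [exact (mp_trans HA Ha Ha') | exact (mp_trans HB Hb Hb')].
  - intros [a b] [a' b'] [Ha Hb] [Ha' Hb'];
      f_equal; [exact (mp_antisym HA Ha Ha') | exact (mp_antisym HB Hb Hb')].
  - intros [a b] [a' b'] [a'' b'']; f_equal; [apply (mp_assoc HA) | apply (mp_assoc HB)].
  - intros [a b]; f_equal; [apply (mp_unit_l HA) | apply (mp_unit_l HB)].
  - intros [a b]; f_equal; [apply (mp_unit_r HA) | apply (mp_unit_r HB)].
  - intros [a b] [a' b'] [c d] [Ha Hb];
      split; [exact (mp_mono_l HA c Ha) | exact (mp_mono_l HB d Hb)].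
  - intros [c d] [a b] [a' b'] [Ha Hb];
      split; [exact (mp_mono_r HA c Ha) | exact (mp_mono_r HB d Hb)].
Qed.

End ProductMonoidalPoset.

Definition pred_sub {T : Type} (P Q : T -> Prop) : Prop := forall z, P z -> Q z.
Definition pred_meet {T : Type} (P Q : T -> Prop) : T -> Prop := fun z => P z /\ Q z.
Definition pred_top {T : Type} : T -> Prop := fun _ => True.

Lemma pred_monoidal_poset (T : Type) :
  monoidal_poset (@pred_sub T) (@pred_meet T) (@pred_top T).
Proof.
  unfold pred_sub, pred_meet, pred_top; split; try firstorder;
    intros; extensionality z; apply propositional_extensionality; firstorder.
Qed.

Section Downsets.
Variables (M : Type) (le : M -> M -> Prop) (mul : M -> M -> M) (e : M).
Hypothesis M_mp : monoidal_poset le mul e.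

Definition is_downset (U : M -> Prop) : Prop := forall p q, le p q -> U q -> U p.
Definition downset : Type := { U : M -> Prop | is_downset U }.
Definition in_downset (U : downset) : M -> Prop := proj1_sig U.
Coercion in_downset : downset >-> Funclass.

Lemma downset_closed (U : downset) p q : le p q -> U q -> U p.
Proof. exact (proj2_sig U p q). Qed.

Lemma downset_ext (U V : downset) : (forall p, U p <-> V p) -> U = V.
Proof.
  destruct U as [U HU], V as [V HV]; simpl; intros HUV.
  assert (U = V) as <-
    by (extensionality p; apply propositional_extensionality; apply HUV).
  f_equal; apply proof_irrelevance.
Qed.

Lemma le_mul p p' q q' : le p p' -> le q q' -> le (mul p q) (mul p' q').
Proof.
  intros Hp Hq.
  exact (mp_trans M_mp (mp_mono_l M_mp q Hp) (mp_mono_r M_mp p' Hq)).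
Qed.

Definition ds_le (U V : downset) : Prop := forall p, U p -> V p.

Program Definition principal (q : M) : downset := fun p => le p q.
Next Obligation. intros p p' Hp Hp'; exact (mp_trans M_mp Hp Hp'). Qed.

Program Definition ds_mul (U V : downset) : downset :=
  fun p => exists q r, U q /\ V r /\ le p (mul q r).
Next Obligation.
  intros p p' Hp [q [r [Hq [Hr Hp']]]].
  exists q, r; repeat split; auto; exact (mp_trans M_mp Hp Hp').
Qed.

Definition ds_unit : downset := principal e.

Program Definition ds_sup (S : downset -> Prop) : downset :=
  fun p => exists U, S U /\ U p.
Next Obligation.
  intros p p' Hp [U [HU Hp']]; exists U; split; [exact HU | exact (downset_closed Hp Hp')].
Qed.

Lemma principal_le_iff (q : M) (U : downset) : ds_le (principal q) U <-> U q.
Proof.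
  split.
  - intros H; apply H; apply (mp_refl M_mp).
  - intros Hq p Hp; exact (downset_closed Hp Hq).
Qed.

Lemma ds_mul_principal (p q : M) : ds_mul (principal p) (principal q) = principal (mul p q).
Proof.
  apply downset_ext; intros s; simpl; split.
  - intros [p' [q' [Hp [Hq Hs]]]]; exact (mp_trans M_mp Hs (le_mul Hp Hq)).
  - intros Hs; exists p, q; repeat split; auto; apply (mp_refl M_mp).
Qed.

Lemma in_ds_mul_l (U V W : downset) p :
  ds_mul (ds_mul U V) W p <->
  exists q r s, U q /\ V r /\ W s /\ le p (mul (mul q r) s).
Proof.
  simpl; split.
  - intros [x [s [[q [r [Hq [Hr Hx]]]] [Hs Hp]]]].
    exists q, r, s; repeat split; auto.
    exact (mp_trans M_mp Hp (mp_mono_l M_mp s Hx)).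
  - intros [q [r [s [Hq [Hr [Hs Hp]]]]]].
    exists (mul q r), s; repeat split; auto.
    exists q, r; repeat split; auto; apply (mp_refl M_mp).
Qed.

Lemma in_ds_mul_r (U V W : downset) p :
  ds_mul U (ds_mul V W) p <->
  exists q r s, U q /\ V r /\ W s /\ le p (mul q (mul r s)).
Proof.
  simpl; split.
  - intros [q [x [Hq [[r [s [Hr [Hs Hx]]]] Hp]]]].
    exists q, r, s; repeat split; auto.
    exact (mp_trans M_mp Hp (mp_mono_r M_mp q Hx)).
  - intros [q [r [s [Hq [Hr [Hs Hp]]]]]].
    exists q, (mul r s); repeat split; auto.
    exists r, s; repeat split; auto; apply (mp_refl M_mp).
Qed.

Lemma ds_mul_assoc (U V W : downset) : ds_mul (ds_mul U V) W = ds_mul U (ds_mul V W).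
Proof.
  apply downset_ext; intros p; rewrite in_ds_mul_l, in_ds_mul_r.
  setoid_rewrite (mp_assoc M_mp); reflexivity.
Qed.

Lemma ds_mul_unit_l (U : downset) : ds_mul ds_unit U = U.
Proof.
  apply downset_ext; intros p; simpl; split.
  - intros [q [r [Hq [Hr Hp]]]]; apply (downset_closed Hp).
    apply (downset_closed (mp_mono_l M_mp r Hq)); rewrite (mp_unit_l M_mp); exact Hr.
  - intros Hp; exists e, p; repeat split; auto; [apply (mp_refl M_mp) |].
    rewrite (mp_unit_l M_mp); apply (mp_refl M_mp).
Qed.

Lemma ds_mul_unit_r (U : downset) : ds_mul U ds_unit = U.
Proof.
  apply downset_ext; intros p; simpl; split.
  - intros [q [r [Hq [Hr Hp]]]]; apply (downset_closed Hp).
    apply (downset_closed (mp_mono_r M_mp q Hr)); rewrite (mp_unit_r M_mp); exact Hq.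
  - intros Hp; exists p, e; repeat split; auto; [apply (mp_refl M_mp) |].
    rewrite (mp_unit_r M_mp); apply (mp_refl M_mp).
Qed.

Lemma downset_monoidal_poset : monoidal_poset ds_le ds_mul ds_unit.
Proof.
  split; unfold ds_le.
  - auto.
  - auto.
  - intros U V HUV HVU; apply downset_ext; split; auto.
  - exact ds_mul_assoc.
  - exact ds_mul_unit_l.
  - exact ds_mul_unit_r.
  - intros U U' V HU p [q [r [Hq [Hr Hp]]]]; exists q, r; auto.
  - intros U V V' HV p [q [r [Hq [Hr Hp]]]]; exists q, r; auto.
Qed.

Lemma ds_sup_ub (S : downset -> Prop) U : S U -> ds_le U (ds_sup S).
Proof. intros HU p Hp; exists U; auto. Qed.

Lemma ds_sup_least (S : downset -> Prop) V :
  (forall U, S U -> ds_le U V) -> ds_le (ds_sup S) V.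
Proof. intros H p [U [HU Hp]]; exact (H U HU p Hp). Qed.

Lemma ds_mul_sup_r (U : downset) (S : downset -> Prop) :
  ds_mul U (ds_sup S) = ds_sup (fun W => exists V, S V /\ W = ds_mul U V).
Proof.
  apply downset_ext; intros p; simpl; split.
  - intros [q [r [Hq [[V [HV Hr]] Hp]]]].
    exists (ds_mul U V); split; [exists V; auto | exists q, r; auto].
  - intros [W [[V [HV ->]] [q [r [Hq [Hr Hp]]]]]].
    exists q, r; repeat split; auto; exists V; auto.
Qed.

Lemma ds_mul_sup_l (U : downset) (S : downset -> Prop) :
  ds_mul (ds_sup S) U = ds_sup (fun W => exists V, S V /\ W = ds_mul V U).
Proof.
  apply downset_ext; intros p; simpl; split.
  - intros [q [r [[V [HV Hq]] [Hr Hp]]]].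
    exists (ds_mul V U); split; [exists V; auto | exists q, r; auto].
  - intros [W [[V [HV ->]] [q [r [Hq [Hr Hp]]]]]].
    exists q, r; repeat split; auto; exists V; auto.
Qed.

Definition downset_quantale : Quantale :=
  {| q_mp := downset_monoidal_poset;
     q_sup_ub := ds_sup_ub;
     q_sup_least := ds_sup_least;
     q_distr_l := ds_mul_sup_r;
     q_distr_r := ds_mul_sup_l |}.

Section DownsetSpacetime.
Variable n : M -> M.
Hypotheses (n_mono : forall p q, le p q -> le (n p) (n q))
  (n_unit : le (n e) e) (n_mul : forall p q, le (n (mul p q)) (mul (n p) (n q))).

Program Definition ds_image (U : downset) : downset := fun p => exists q, U q /\ le p (n q).
Next Obligation.
  intros p p' Hp [q [Hq Hp']]; exists q; split; [exact Hq | exact (mp_trans M_mp Hp Hp')].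
Qed.

Lemma ds_image_principal (q : M) : ds_image (principal q) = principal (n q).
Proof.
  apply downset_ext; intros p; simpl; split.
  - intros [q' [Hq' Hp]]; exact (mp_trans M_mp Hp (n_mono Hq')).
  - intros Hp; exists q; split; [apply (mp_refl M_mp) | exact Hp].
Qed.

Lemma ds_image_sup (S : downset -> Prop) :
  ds_image (ds_sup S) = ds_sup (fun W => exists U, S U /\ W = ds_image U).
Proof.
  apply downset_ext; intros p; simpl; split.
  - intros [q [[U [HU Hq]] Hp]]; exists (ds_image U); split; [exists U; auto | exists q; auto].
  - intros [W [[U [HU ->]] [q [Hq Hp]]]]; exists q; split; [exists U; auto | exact Hp].
Qed.

Lemma ds_image_unit : ds_le (ds_image ds_unit) ds_unit.
Proof.
  intros p [q [Hq Hp]].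
  exact (mp_trans M_mp Hp (mp_trans M_mp (n_mono Hq) n_unit)).
Qed.

Lemma ds_image_mul (U V : downset) :
  ds_le (ds_image (ds_mul U V)) (ds_mul (ds_image U) (ds_image V)).
Proof.
  intros p [s [[q [r [Hq [Hr Hs]]]] Hp]].
  exists (n q), (n r); repeat split.
  - exists q; split; [exact Hq | apply (mp_refl M_mp)].
  - exists r; split; [exact Hr | apply (mp_refl M_mp)].
  - exact (mp_trans M_mp Hp (mp_trans M_mp (n_mono Hs) (n_mul q r))).
Qed.

Definition downset_spacetime : Spacetime :=
  {| st_q := downset_quantale;
     nabla_join := ds_image_sup;
     nabla_unit := ds_image_unit;
     nabla_mul := ds_image_mul |}.

End DownsetSpacetime.
End Downsets.

Section SpacetimeImplication.
Variable S : Spacetime.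

Lemma nabla_mono (x y : S) : qle x y -> qle (nabla x) (nabla y).
Proof.
  intros Hxy.
  assert (Hy : y = qsup (fun z => z = x \/ z = y)).
  { apply (mp_antisym (q_mp S)).
    - apply q_sup_ub; right; reflexivity.
    - apply q_sup_least; intros z [-> | ->]; [exact Hxy | apply (mp_refl (q_mp S))]. }
  rewrite Hy, nabla_join; apply q_sup_ub.
  exists x; split; [left |]; reflexivity.
Qed.

Lemma nabla_box_le (z : S) : qle (nabla (box z)) z.
Proof.
  unfold box; rewrite nabla_join; apply q_sup_least.
  intros y [x [Hx ->]]; exact Hx.
Qed.

Lemma qmul_rimp_le (X Y : S) : qle (qmul X (rimp X Y)) Y.
Proof.
  unfold rimp; rewrite q_distr_l; apply q_sup_least.
  intros y [x [Hx ->]]; exact Hx.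
Qed.

Lemma le_impS (x X Y : S) : qle x (impS X Y) <-> qle (qmul X (nabla x)) Y.
Proof.
  split; intros H.
  - apply (mp_trans (q_mp S)) with (qmul X (rimp X Y)); [| apply qmul_rimp_le].
    apply (mp_mono_r (q_mp S)).
    exact (mp_trans (q_mp S) (nabla_mono H) (nabla_box_le _)).
  - apply q_sup_ub; apply q_sup_ub; exact H.
Qed.

End SpacetimeImplication.

Section StrongAlgebraEmbedding.
Variables (A : Type) (le : A -> A -> Prop) (mul : A -> A -> A) (e : A) (imp : A -> A -> A).
Hypotheses (A_mp : monoidal_poset le mul e) (A_imp : is_implication le mul e imp).

Let M : Type := A * (A -> Prop).
Let leM : M -> M -> Prop := prod_le le pred_sub.
Let M_mp : monoidal_poset leM (prod_mul mul pred_meet) (e, pred_top) :=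
  prod_monoidal_poset A_mp (pred_monoidal_poset A).

Definition forget_pred (p : M) : M := (fst p, pred_top).

Lemma forget_pred_mono p q : leM p q -> leM (forget_pred p) (forget_pred q).
Proof. intros [H _]; split; [exact H | intros z Hz; exact Hz]. Qed.

Lemma forget_pred_unit : leM (forget_pred (e, pred_top)) (e, pred_top).
Proof. apply (mp_refl M_mp). Qed.

Lemma forget_pred_mul p q :
  leM (forget_pred (prod_mul mul pred_meet p q))
      (prod_mul mul pred_meet (forget_pred p) (forget_pred q)).
Proof. split; [apply (mp_refl A_mp) | intros z _; split; exact I]. Qed.

Definition strong_spacetime : Spacetime :=
  downset_spacetime M_mp forget_pred_mono forget_pred_unit forget_pred_mul.

Let nablaM : downset leM -> downset leM := ds_image M_mp forget_pred.

Definition embed (a : A) : downset leM := principal M_mp (a, pred_top).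

Lemma embed_le_iff a b : le a b <-> ds_le (embed a) (embed b).
Proof.
  unfold embed; rewrite principal_le_iff; split.
  - intros H; split; [exact H | intros z Hz; exact Hz].
  - intros [H _]; exact H.
Qed.

Lemma embed_mul a b : embed (mul a b) = ds_mul M_mp (embed a) (embed b).
Proof.
  unfold embed; rewrite ds_mul_principal.
  unfold prod_mul, pred_meet, pred_top; simpl; do 2 f_equal.
  extensionality z; apply propositional_extensionality; tauto.
Qed.

Lemma embed_strict_monoidal_order_embedding :
  strict_monoidal_order_embedding le mul e (X := strong_spacetime) embed.
Proof. split; [reflexivity | split; [exact embed_mul | exact embed_le_iff]]. Qed.

Definition arrow_point (c a : A) : M := (imp c a, fun z => le z c).

Program Definition arrows (U : downset leM) : downset leM :=
  fun p => exists a c, ds_le (embed a) U /\ leM p (arrow_point c a).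
Next Obligation.
  intros p p' Hp [a [c [Ha Hp']]]; exists a, c; split; [exact Ha | exact (mp_trans M_mp Hp Hp')].
Qed.

Lemma arrows_mono (U V : downset leM) : ds_le U V -> ds_le (arrows U) (arrows V).
Proof.
  intros HUV p [a [c [Ha Hp]]]; exists a, c; split; [| exact Hp].
  intros q Hq; exact (HUV q (Ha q Hq)).
Qed.

Lemma in_arrows_embed a p : arrows (embed a) p <-> exists c, leM p (arrow_point c a).
Proof.
  split.
  - intros [a' [c [Ha' [Hp1 Hp2]]]]; exists c; split; [| exact Hp2].
    apply (mp_trans A_mp Hp1), (imp_mono A_imp), embed_le_iff, Ha'.
  - intros [c Hp]; exists a, c; split; [intros q Hq; exact Hq | exact Hp].
Qed.

Lemma arrows_embed_mul_nabla_le a b :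
  ds_le (ds_mul M_mp (arrows (embed a)) (nablaM (embed (imp a b)))) (arrows (embed b)).
Proof.
  intros s [q [r [Hq [Hr Hs]]]].
  apply in_arrows_embed in Hq as [c Hq].
  unfold nablaM, embed in Hr; rewrite ds_image_principal in Hr by exact forget_pred_mono.
  apply in_arrows_embed; exists c.
  apply (mp_trans M_mp Hs), (mp_trans M_mp (le_mul M_mp Hq Hr)).
  split; simpl.
  - exact (imp_comp A_imp c a b).
  - intros z [Hz _]; exact Hz.
Qed.

Lemma le_imp_of_mul_nabla_le a b p :
  ds_le (ds_mul M_mp (arrows (embed a)) (nablaM (principal M_mp p))) (arrows (embed b)) ->
  le (fst p) (imp a b).
Proof.
  intros H.
  assert (Hmem : arrows (embed b) (prod_mul mul pred_meet (arrow_point a a) (forget_pred p))).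
  { apply H; exists (arrow_point a a), (forget_pred p); split; [| split].
    - apply in_arrows_embed; exists a; apply (mp_refl M_mp).
    - unfold nablaM; rewrite ds_image_principal by exact forget_pred_mono; apply (mp_refl M_mp).
    - apply (mp_refl M_mp). }
  apply in_arrows_embed in Hmem as [c [Hfst Hsnd]].
  assert (Hac : le a c) by (apply Hsnd; split; [apply (mp_refl A_mp) | exact I]).
  simpl in Hfst.
  apply (mp_trans A_mp) with (imp c b); [| exact (imp_anti A_imp b Hac)].
  apply (mp_trans A_mp) with (mul (imp a a) (fst p)); [| exact Hfst].
  rewrite <- (mp_unit_l A_mp (fst p)) at 1.
  exact (mp_mono_l A_mp (fst p) (imp_refl A_imp a)).
Qed.

Lemma embed_imp a b :
  embed (imp a b) = impS (S := strong_spacetime) (arrows (embed a)) (arrows (embed b)).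
Proof.
  apply (mp_antisym (q_mp strong_spacetime)).
  - apply le_impS, arrows_embed_mul_nabla_le.
  - intros p Hp.
    apply (principal_le_iff M_mp), (le_impS (S := strong_spacetime)) in Hp.
    split; [exact (le_imp_of_mul_nabla_le Hp) | intros z _; exact I].
Qed.

End StrongAlgebraEmbedding.

Theorem theorem6p1 (A : Type) (le : A -> A -> Prop) (mul : A -> A -> A) (e : A)
  (imp : A -> A -> A) :
  strong_algebra le mul e imp ->
  exists (S : Spacetime) (F : S -> S) (i : A -> S),
    (forall x y, @qle S x y -> @qle S (F x) (F y)) /\
    strict_monoidal_order_embedding le mul e i /\
    (forall a b, i (imp a b) = @impS S (F (i a)) (F (i b))).
Proof.
  intros [A_mp A_imp].
  exists (strong_spacetime A_mp), (arrows imp A_mp), (embed A_mp).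
  split; [| split].
  - intros U V; apply arrows_mono.
  - exact (embed_strict_monoidal_order_embedding A_mp).
  - exact (embed_imp A_mp A_imp).
Qed.
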